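(* If $T$ is a minimal tree with $|T|\ge 18$, then the root of $T$ has exactly two children, and each child of the root has exactly two children.
   Context: A rooted tree $T$ is a finite tree with a distinguished vertex, its root; its order $|T|$ is its number of vertices. For vertices $u,v$, the infimum of $u$ and $v$ is the vertex common to the path from $u$ to the root and the path from $v$ to the root that is furthest from the root. A set $X\subseteq V(T)$ is infima closed if the infimum of any two elements of $X$ lies in $X$. $I(T)$ denotes the number of nonempty infima closed subsets of $V(T)$. For $n\ge1$, $m_n=\min\{I(T): |T|=n\}$; a rooted tree $T$ with $I(T)=m_{|T|}$ is called minimal. *)

From mathcomp Require Import all_boot.
Set Implicit Arguments. Unset Strict Implicit. Unset Printing Implicit Defensive.

(* Finite rooted trees: a node with a (finite) list of children subtrees.
   The order of children is irrelevant for everything below. *)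
Inductive rtree := Node of seq rtree.

Definition children (t : rtree) : seq rtree := let: Node ts := t in ts.

Fixpoint tree_order (t : rtree) : nat :=
  let: Node ts := t in (sumn (map tree_order ts)).+1.

(* Vertices are identified with their addresses: the root is [::], and
   i :: a is the vertex at address a in the i-th child subtree. *)
Fixpoint verts (t : rtree) : seq (seq nat) :=
  let: Node ts := t in
  [::] :: (fix aux (i : nat) (us : seq rtree) : seq (seq nat) :=
             match us with
             | [::] => [::]
             | u :: us' => map (cons i) (verts u) ++ aux i.+1 us'
             end) 0 ts.

(* The path from vertex a to the root consists of the prefixes of a, so the
   infimum of two vertices is their longest common prefix. *)
Fixpoint infimum (a b : seq nat) : seq nat :=
  match a, b with
  | x :: a', y :: b' => if x == y then x :: infimum a' b' else [::]
  | _, _ => [::]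
  end.

Definition vert (t : rtree) (k : 'I_(size (verts t))) : seq nat :=
  nth [::] (verts t) k.

Definition infima_closed (t : rtree) (X : {set 'I_(size (verts t))}) : bool :=
  [forall i in X, forall j in X,
     infimum (vert i) (vert j) \in [seq vert k | k in X]].

Definition I (t : rtree) : nat :=
  #|[set X : {set 'I_(size (verts t))} | (X != set0) && infima_closed X]|.

(* T is minimal iff I(T) = m_|T| = min { I(T') : |T'| = |T| } *)
Definition minimal_tree (t : rtree) : Prop :=
  forall t' : rtree, tree_order t' = tree_order t -> I t <= I t'.

(* Everything rests on the recursion for I at a root with children t_1..t_k,
     I(T) = sum_i I(t_i) + prod_i (I(t_i) + 1),
   since a nonempty infima closed set avoiding the root lies inside a single
   child, while one containing the root meets every child in an arbitrary,
   possibly empty, infima closed set; it is obtained (I_node) by counting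
   indicator bit sequences of vertex sets.  From it we derive local
   improvements: every child of a minimal tree is minimal, and a minimal tree
   of order >= 8 has exactly two children (minimal_two_children), because any
   other shape admits a rearrangement with smaller I.  Next, lower bounds for
   m_n with n <= 8 are checked by computation; they give I >= 101 from order
   8 on.  Finally, a child of order <= 7 in a minimal tree of order >= 18
   would force its nephews to have order <= 7 too, and an explicit tree then
   beats it (no_small_child); so both children have order >= 8. *)

From HB Require Import structures.
From mathcomp Require Import all_boot zify.
Set Implicit Arguments. Unset Strict Implicit. Unset Printing Implicit Defensive.

(* Subsets of an N-element set are encoded by their indicator bit sequences;
   [bitseqs n] enumerates all bit sequences of length n without repetition. *)
Fixpoint bitseqs (n : nat) : seq bitseq :=
  if n is n'.+1 then map (cons true) (bitseqs n') ++ map (cons false) (bitseqs n')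
  else [:: [::]].

Lemma mem_bitseqs n m : (m \in bitseqs n) = (size m == n).
Proof.
elim: n m => [|n IH] [|b m] //=; first by rewrite mem_cat; apply/orP => -[] /mapP [].
rewrite eqSS -IH mem_cat.
have [inj_t inj_f] : injective (cons true) /\ injective (cons false) by split=> ? ? [].
case: b; rewrite ?(mem_map inj_t) ?(mem_map inj_f).
- by case: (m \in bitseqs n) => //=; apply/mapP => -[].
- by have -> : (false :: m \in [seq true :: i | i <- bitseqs n]) = false by apply/mapP => -[].
Qed.

Lemma uniq_bitseqs n : uniq (bitseqs n).
Proof.
elim: n => //= n IH; rewrite cat_uniq !map_inj_uniq //; try by move=> ? ? [].
by rewrite IH /= andbT; apply/hasP => -[x /mapP [y _ ->]] /mapP [].
Qed.

Lemma count_bitseqs_add (R : pred bitseq) n1 n2 :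
  count R (bitseqs (n1 + n2)) =
  sumn [seq count (fun m2 => R (m1 ++ m2)) (bitseqs n2) | m1 <- bitseqs n1].
Proof.
elim: n1 R => [|n1 IH] R /=; first by rewrite addn0.
by rewrite count_cat !count_map !IH map_cat sumn_cat -!map_comp.
Qed.

Definition indicator N (X : {set 'I_N}) : bitseq := [seq i \in X | i <- enum 'I_N].

Lemma card_set_count N (R : pred bitseq) :
  #|[set X : {set 'I_N} | R (indicator X)]| = count R (bitseqs N).
Proof.
rewrite cardsE cardE /enum_mem size_filter.
have -> : count (mem [pred X : {set 'I_N} | R (indicator X)]) (Finite.enum {set 'I_N})
   = count R (map (@indicator N) (Finite.enum {set 'I_N})) by rewrite count_map.
apply/permP: R; apply: uniq_perm; last 1 first.
- move=> m; rewrite mem_bitseqs; apply/mapP/idP.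
    by move=> [X _ ->]; rewrite /indicator -?enumT size_map size_enum_ord.
  move=> /eqP Hm; exists [set i : 'I_N | nth false m i]; first by rewrite -enumT mem_enum.
  apply: (@eq_from_nth _ false); first by rewrite /indicator -?enumT size_map size_enum_ord Hm.
  move=> i; rewrite Hm => Hi.
  by rewrite /indicator -?enumT (nth_map (Ordinal Hi)) ?size_enum_ord // inE
     -[i]/(val (Ordinal Hi)) nth_ord_enum.
- rewrite map_inj_uniq; first by rewrite -enumT enum_uniq.
  move=> X Y H; apply/setP => i.
  have := congr1 (fun s => nth false s i) H.
  by rewrite /indicator !(nth_map i) -?enumT ?size_enum_ord ?ltn_ord // nth_ord_enum.
- exact: uniq_bitseqs.
Qed.

Definition inf_closed (S : seq (seq nat)) : bool :=
  all (fun u => all (fun v => infimum u v \in S) S) S.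

Definition ne_inf_closed (S : seq (seq nat)) : bool := (S != [::]) && inf_closed S.

Definition Icount (t : rtree) : nat :=
  count (fun m => ne_inf_closed (mask m (verts t))) (bitseqs (size (verts t))).

Lemma image_vert (t : rtree) (X : {set 'I_(size (verts t))}) :
  [seq vert k | k in X] = mask (indicator X) (verts t).
Proof.
rewrite /image_mem /enum_mem filter_mask map_mask /indicator -?enumT; congr mask.
transitivity [seq nth [::] (verts t) i | i <- [seq val k | k <- enum 'I_(size (verts t))]].
  by rewrite -map_comp.
by rewrite val_enum_ord -/(mkseq _ _) mkseq_nth.
Qed.

Lemma I_Icount t : I t = Icount t.
Proof.
rewrite /I /Icount -card_set_count; congr (#|pred_of_set _|); apply/setP => X.
rewrite !inE -image_vert; congr andb.
  by rewrite -cards_eq0 -(size_image (@vert t)); case: (image _ _).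
rewrite /infima_closed /inf_closed; set S := [seq vert k | k in X].
apply/forall_inP/allP.
- move=> H u /imageP [i Hi ->]; apply/allP => v /imageP [j Hj ->].
  exact: (forall_inP (H i Hi) j Hj).
- move=> H i Hi; apply/forall_inP => j Hj.
  have Si : vert i \in S by apply/imageP; exists i.
  have Sj : vert j \in S by apply/imageP; exists j.
  by have /allP := H (vert i) Si; apply.
Qed.

(* Addresses of the vertices lying in the children [ts], numbered from [j]:
   this is the (anonymous) inner recursion of [verts]. *)
Fixpoint verts_from (j : nat) (ts : seq rtree) : seq (seq nat) :=
  if ts is t :: ts' then map (cons j) (verts t) ++ verts_from j.+1 ts' else [::].

Lemma verts_node ts : verts (Node ts) = [::] :: verts_from 0 ts.
Proof. by []. Qed.

Lemma infimum_cons_eq j a b : infimum (j :: a) (j :: b) = j :: infimum a b.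
Proof. by rewrite /= eqxx. Qed.

Lemma infimum_cons_neq j k a b : j != k -> infimum (j :: a) (k :: b) = [::].
Proof. by move=> /negbTE /= ->. Qed.

Lemma infimum_nilr v : infimum v [::] = [::].
Proof. by case: v. Qed.

Definition root_closed (S : seq (seq nat)) : bool :=
  all (fun u => all (fun v => infimum u v \in [::] :: S) S) S.

(* A set containing the root is nonempty, and the root absorbs all infima
   with it. *)
Lemma ne_inf_closed_root S : ne_inf_closed ([::] :: S) = root_closed S.
Proof.
rewrite /ne_inf_closed /inf_closed /root_closed /= mem_head all_predT /=.
by apply: eq_all => u /=; rewrite infimum_nilr mem_head.
Qed.

Definition off_branch j (S : seq (seq nat)) :=
  forall v, v \in S -> exists k a, v = k :: a /\ k != j.

Lemma off_branch_verts_from j ts S :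
  {subset S <= verts_from j.+1 ts} -> off_branch j S.
Proof.
suff head_ge i us v : v \in verts_from i us -> exists k a, v = k :: a /\ i <= k.
  by move=> sub v /sub /head_ge [k [a [-> lt_jk]]]; exists k, a; rewrite neq_ltn lt_jk orbT.
elim: us i => [|u us IH] i //=; rewrite mem_cat => /orP [/mapP [a _ ->]|/IH [k [a [-> H]]]].
  by exists i, a.
by exists k, a; split => //; apply: ltnW.
Qed.

Lemma inf_closed_map j S : inf_closed (map (cons j) S) = inf_closed S.
Proof.
rewrite /inf_closed all_map; apply: eq_all => a; rewrite /= all_map.
by apply: eq_all => b; rewrite /preim /= eqxx mem_map //; move=> ? ? [].
Qed.

Section OffBranch.
Variables (j : nat) (S1 S2 : seq (seq nat)).
Hypothesis S2_off : off_branch j S2.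

Lemma mem_branch w : (j :: w \in map (cons j) S1 ++ S2) = (w \in S1).
Proof.
rewrite mem_cat mem_map; last by move=> ? ? [].
by case: (w \in S1) => //=; apply/negP => /S2_off [k [a [[<- _]]]]; rewrite eqxx.
Qed.

Lemma nil_notin_branch : ([::] \in map (cons j) S1 ++ S2) = false.
Proof. by rewrite mem_cat; apply/negP => /orP [/mapP [? _] //|/S2_off [? [? []]]]. Qed.

Lemma infimum_off_branch u v : u \in S2 -> v \in S2 ->
  (infimum u v \in [::] :: map (cons j) S1 ++ S2) = (infimum u v \in [::] :: S2).
Proof.
move=> /S2_off [k [a [-> Hk]]] /S2_off [k' [b [-> _]]].
case: (eqVneq k k') => [<-|Hne]; last by rewrite infimum_cons_neq // !mem_head.
have E0 : (k :: infimum a b \in [seq j :: i | i <- S1]) = false.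
  by apply/negP => /mapP [? _ [E _]]; rewrite E eqxx in Hk.
by rewrite infimum_cons_eq !in_cons /= mem_cat E0.
Qed.

Lemma root_closed_split :
  root_closed (map (cons j) S1 ++ S2) = inf_closed S1 && root_closed S2.
Proof.
apply/idP/andP.
- move=> /allP Hall; split.
  + apply/allP => a Ha; apply/allP => b Hb.
    have Ha' : j :: a \in map (cons j) S1 ++ S2 by rewrite mem_cat map_f.
    have Hb' : j :: b \in map (cons j) S1 ++ S2 by rewrite mem_cat map_f.
    by have := allP (Hall _ Ha') _ Hb'; rewrite infimum_cons_eq in_cons /= mem_branch.
  + apply/allP => u Hu; apply/allP => v Hv.
    have Hu' : u \in map (cons j) S1 ++ S2 by rewrite mem_cat Hu orbT.
    have Hv' : v \in map (cons j) S1 ++ S2 by rewrite mem_cat Hv orbT.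
    by have := allP (Hall _ Hu') _ Hv'; rewrite infimum_off_branch.
- move=> [/allP H1 /allP H2]; apply/allP => u;
    rewrite mem_cat => /orP [/mapP [a Ha ->]|Hu];
    apply/allP => v; rewrite mem_cat => /orP [/mapP [b Hb ->]|Hv].
  + by rewrite infimum_cons_eq in_cons /= mem_branch; exact: (allP (H1 _ Ha)).
  + by have [k [c [-> Hk]]] := S2_off Hv; rewrite infimum_cons_neq 1?eq_sym // mem_head.
  + by have [k [c [-> Hk]]] := S2_off Hu; rewrite infimum_cons_neq // mem_head.
  + by rewrite infimum_off_branch //; exact: (allP (H2 _ Hu)).
Qed.

(* Without the root, a nonempty closed set lies entirely in one branch:
   two vertices in different branches would have the root as infimum. *)
Lemma ne_inf_closed_split :
  ne_inf_closed (map (cons j) S1 ++ S2) =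
  (ne_inf_closed S1 && (S2 == [::])) || ((S1 == [::]) && ne_inf_closed S2).
Proof.
move: nil_notin_branch; case: S1 => [|a S1'] nil_out.
  by rewrite /ne_inf_closed /=; case: (_ == _).
case: S2 S2_off nil_out => [|v S2'] off nil_out.
  by rewrite cats0 eqxx andbT /ne_inf_closed inf_closed_map /= orbF.
rewrite /= ?andbF /=; apply/negP => /andP [_ /allP Hall].
have Hj : j :: a \in [seq j :: i | i <- a :: S1'] ++ v :: S2' by rewrite mem_cat mem_head.
have Hv : v \in [seq j :: i | i <- a :: S1'] ++ v :: S2' by rewrite mem_cat mem_head orbT.
have := allP (Hall _ Hj) _ Hv.
have [k [c [E Hk]]] := off _ (mem_head _ _).
by rewrite E infimum_cons_neq 1?eq_sym // -E nil_out.
Qed.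

End OffBranch.

Definition Isum (ts : seq rtree) : nat := sumn (map I ts).
Definition Iprod (ts : seq rtree) : nat := foldr muln 1 (map (fun t => (I t).+1) ts).

Lemma count_mask_nil (V : seq (seq nat)) :
  count (fun m => mask m V == [::]) (bitseqs (size V)) = 1.
Proof.
have count_zero n : count (fun m => ~~ has id m) (bitseqs n) = 1.
  elim: n => //= n IH; rewrite count_cat !count_map (@eq_count _ _ pred0) //.
  by rewrite count_pred0 -IH.
rewrite -(count_zero (size V)); apply: eq_in_count => m.
rewrite mem_bitseqs => /eqP Hm.
by rewrite -size_eq0 size_mask // has_count -leqNgt leqn0.
Qed.

Lemma count_inf_closed t :
  count (fun m => inf_closed (mask m (verts t))) (bitseqs (size (verts t))) = (I t).+1.
Proof.
rewrite I_Icount /Icount -addn1 -(count_mask_nil (verts t)) addnC.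
rewrite -(count_predUI (fun m => mask m (verts t) == [::])
                       (fun m => ne_inf_closed (mask m (verts t)))).
rewrite (@eq_count _ (predI _ _) pred0) ?count_pred0 ?addn0; last first.
  by move=> m /=; rewrite /ne_inf_closed; case: eqP.
by apply: eq_count => m /=; rewrite /ne_inf_closed; case: eqP => [->|].
Qed.

Lemma mask_verts_from j t ts m1 m2 : size m1 = size (verts t) ->
  mask (m1 ++ m2) (verts_from j (t :: ts)) =
  map (cons j) (mask m1 (verts t)) ++ mask m2 (verts_from j.+1 ts).
Proof. by move=> H; rewrite /= mask_cat ?size_map // map_mask. Qed.

Lemma size_verts_from j t ts :
  size (verts_from j (t :: ts)) = size (verts t) + size (verts_from j.+1 ts).
Proof. by rewrite /= size_cat size_map. Qed.

(* Closed sets containing the root: independent choices in every child. *)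
Lemma count_root_closed j ts :
  count (fun m => root_closed (mask m (verts_from j ts))) (bitseqs (size (verts_from j ts)))
  = Iprod ts.
Proof.
elim: ts j => [|t ts IH] j //.
have -> : Iprod (t :: ts) = (I t).+1 * Iprod ts by [].
have sum_scale (L : seq bitseq) (a : pred bitseq) c :
    sumn [seq a m * c | m <- L] = count a L * c.
  by elim: L => //= m L ->; rewrite mulnDl.
have count_andl (b : bool) (q : pred bitseq) s : count (fun x => b && q x) s = b * count q s.
  by case: b; rewrite /= ?mul1n ?mul0n ?count_pred0.
rewrite size_verts_from count_bitseqs_add -count_inf_closed -(IH j.+1) -sum_scale.
congr sumn; apply/eq_in_map => m1; rewrite mem_bitseqs => /eqP Hm1.
rewrite -count_andl; apply: eq_count => m2.
rewrite mask_verts_from // root_closed_split //.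
by apply: off_branch_verts_from => v; exact: mem_mask.
Qed.

(* Nonempty closed sets avoiding the root: they lie inside a single child. *)
Lemma count_ne_inf_closed j ts :
  count (fun m => ne_inf_closed (mask m (verts_from j ts))) (bitseqs (size (verts_from j ts)))
  = Isum ts.
Proof.
elim: ts j => [|t ts IH] j //.
have -> : Isum (t :: ts) = I t + Isum ts by [].
have count_or (a b : bool) (p q : pred bitseq) s : ~~ (a && b) ->
    count (fun x => (a && p x) || (b && q x)) s = a * count p s + b * count q s.
  by case: a; case: b => //= _; rewrite ?mul1n ?mul0n ?addn0 ?count_pred0 //;
     apply: eq_count => x /=; rewrite ?orbF.
have sum_lin (L : seq bitseq) (a b : pred bitseq) c :
    sumn [seq a m * 1 + b m * c | m <- L] = count a L + count b L * c.
  by elim: L => //= m L ->; rewrite mulnDl muln1 addnACA.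
rewrite size_verts_from count_bitseqs_add.
rewrite I_Icount -[Isum ts]mul1n -(count_mask_nil (verts t)) -sum_lin.
congr sumn; apply/eq_in_map => m1; rewrite mem_bitseqs => /eqP Hm1.
rewrite -(count_mask_nil (verts_from j.+1 ts)) -(IH j.+1) -count_or; last first.
  by rewrite /ne_inf_closed; case: (mask m1 (verts t)) => [|? ?]; rewrite ?andbF.
apply: eq_count => m2; rewrite mask_verts_from // ne_inf_closed_split //.
by apply: off_branch_verts_from => v; exact: mem_mask.
Qed.

(* The recursion for I: a nonempty infima closed set either avoids the root,
   and then lies in one child, or contains it, and then meets each child in
   an arbitrary (possibly empty) infima closed set. *)
Lemma I_node ts : I (Node ts) = Isum ts + Iprod ts.
Proof.
rewrite I_Icount /Icount verts_node /= count_cat !count_map addnC.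
rewrite -(count_ne_inf_closed 0) -(count_root_closed 0); congr addn.
by apply: eq_count => m /=; rewrite ne_inf_closed_root.
Qed.

(* Trees form a countable type, through an encoding into the library's
   generic trees; this provides the equality used by [\in] and [perm_eq]. *)
Fixpoint rtree_encode (t : rtree) : GenTree.tree unit :=
  let: Node ts := t in GenTree.Node 0 (map rtree_encode ts).

Fixpoint rtree_decode (g : GenTree.tree unit) : rtree :=
  if g is GenTree.Node _ gs then Node (map rtree_decode gs) else Node [::].

Lemma rtree_encodeK : cancel rtree_encode rtree_decode.
Proof.
suff H n t : tree_order t <= n -> rtree_decode (rtree_encode t) = t by move=> t; exact: H.
elim: n t => [|n IH] [ts] //= Hn; congr Node.
elim: ts Hn => //= t ts IHts Hn.
rewrite IH; last by move: Hn; rewrite ltnS; apply: leq_trans; rewrite leq_addr.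
by rewrite IHts //; move: Hn; rewrite !ltnS; apply: leq_trans; exact: leq_addl.
Qed.

HB.instance Definition _ := Countable.copy rtree (can_type rtree_encodeK).

Local Notation order := tree_order.
Local Notation leaf := (Node [::]).

Lemma order_node ts : order (Node ts) = (sumn (map order ts)).+1.
Proof. by []. Qed.

Lemma order_pos t : 0 < order t.
Proof. by case: t. Qed.

Lemma order_child t ts : t \in ts -> order t < order (Node ts).
Proof.
elim: ts => //= u us IH; rewrite in_cons => /orP [/eqP ->|/IH H].
  by rewrite ltnS leq_addr.
by apply: (leq_trans H); rewrite ltnS /= leq_addl.
Qed.

Lemma rtree_ind_mem (P : rtree -> Prop) :
  (forall ts, (forall t, t \in ts -> P t) -> P (Node ts)) -> forall t, P t.
Proof.
move=> H; suff K n t : order t <= n -> P t by move=> t; exact: K.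
elim: n t => [|n IH] [ts] Hn //; apply: H => t /order_child Ht.
by apply: IH; rewrite -ltnS; exact: leq_trans Ht Hn.
Qed.

Lemma Isum_nil : Isum [::] = 0. Proof. by []. Qed.
Lemma Iprod_nil : Iprod [::] = 1. Proof. by []. Qed.
Lemma Isum_cons t ts : Isum (t :: ts) = I t + Isum ts. Proof. by []. Qed.
Lemma Iprod_cons t ts : Iprod (t :: ts) = (I t).+1 * Iprod ts. Proof. by []. Qed.

Definition Ipair (x y : nat) : nat := x + y + x.+1 * y.+1.

Lemma I_leaf : I leaf = 1.
Proof. by rewrite I_node. Qed.

Lemma I_pair a b : I (Node [:: a; b]) = Ipair (I a) (I b).
Proof. by rewrite I_node /Isum /Iprod /= addn0 muln1. Qed.

Lemma Ipair_mono x y x' y' : x <= x' -> y <= y' -> Ipair x y <= Ipair x' y'.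
Proof. by move=> H1 H2; rewrite /Ipair; apply: leq_add; [apply: leq_add|apply: leq_mul]. Qed.

Lemma I_pos t : 0 < I t.
Proof.
case: t => ts; rewrite I_node; apply: leq_trans (leq_addl _ _).
by elim: ts => //= t ts IH; rewrite muln_gt0 IH.
Qed.

Lemma Iprod_gt_Isum ts : Isum ts < Iprod ts.
Proof. by elim: ts => // t ts IH; rewrite Isum_cons Iprod_cons; have := I_pos t; nia. Qed.

Lemma Isum_ge_size ts : size ts <= Isum ts.
Proof. by elim: ts => //= t ts IH; rewrite Isum_cons; have := I_pos t; lia. Qed.

Lemma I_nonleaf ts : ts != [::] -> 3 <= I (Node ts).
Proof.
case: ts => // t ts _; rewrite I_node Isum_cons Iprod_cons.
by have := I_pos t; have := Iprod_gt_Isum ts; nia.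
Qed.

Lemma perm_I ts ts' : perm_eq ts ts' -> I (Node ts) = I (Node ts').
Proof.
have prodE (s : seq nat) : foldr muln 1 s = \prod_(i <- s) i.
  by elim: s => [|x s IH]; rewrite ?big_nil ?big_cons //= IH.
move=> P; rewrite !I_node /Isum /Iprod (perm_sumn (perm_map I P)) !prodE.
by rewrite (perm_big _ (perm_map _ P)).
Qed.

Lemma perm_order ts ts' : perm_eq ts ts' -> order (Node ts) = order (Node ts').
Proof. by move=> P; rewrite !order_node (perm_sumn (perm_map order P)). Qed.

Lemma minimal_unbeaten T C :
  minimal_tree T -> order C = order T -> I C < I T -> False.
Proof. by move=> H /H; rewrite leqNgt => /negP. Qed.

Lemma minimal_transfer T T' :
  minimal_tree T -> order T' = order T -> I T' = I T -> minimal_tree T'.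
Proof. by move=> H Ho HI t' Ht'; rewrite HI; apply: H; rewrite Ht'. Qed.

Lemma minimal_perm ts ts' :
  minimal_tree (Node ts) -> perm_eq ts ts' -> minimal_tree (Node ts').
Proof. by move=> H P; apply: (minimal_transfer H); [rewrite (perm_order P)|rewrite (perm_I P)]. Qed.

Lemma minimal_swap a b ts :
  minimal_tree (Node (a :: b :: ts)) -> minimal_tree (Node (b :: a :: ts)).
Proof.
by move=> H; apply: (minimal_perm H); have := perm_catCA [:: a] [:: b] ts; rewrite /= => ->.
Qed.

(* I is increasing in each child, so every child of a minimal tree is minimal. *)
Lemma minimal_child ts t : minimal_tree (Node ts) -> t \in ts -> minimal_tree t.
Proof.
move=> H /perm_to_rem P; have {}H := minimal_perm H P.
move=> t' Ho; rewrite leqNgt; apply/negP => Hlt.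
apply: (minimal_unbeaten H (C := Node (t' :: rem t ts))); first by rewrite !order_node /= Ho.
by rewrite !I_node !Isum_cons !Iprod_cons; have := Iprod_gt_Isum (rem t ts); nia.
Qed.

(* A root with a single child [Node cs] is beaten by the root with children
   [leaf :: cs]. *)
Lemma minimal_no_single_child c :
  minimal_tree (Node [:: c]) -> 3 <= order (Node [:: c]) -> False.
Proof.
case: c => cs H Ho.
have Hcs : 0 < size cs by case: cs Ho H.
apply: (minimal_unbeaten H (C := Node (leaf :: cs))); first by rewrite !order_node /= addn0.
rewrite I_node Isum_cons Iprod_cons I_leaf [I (Node [:: _])]I_node.
by rewrite Isum_cons Iprod_cons Isum_nil Iprod_nil I_node; have := Isum_ge_size cs; lia.
Qed.

(* If a root has at least three children, one of which is a non-leaf [Node s]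
   with I-value at most that of a sibling [t2], then moving a third child [z]
   below [Node s] lowers I. *)
Lemma graft_below_nonleaf s t2 z rest : s != [::] -> I (Node s) <= I t2 ->
  minimal_tree (Node (Node s :: t2 :: z :: rest)) -> False.
Proof.
move=> Hs Hle H.
apply: (minimal_unbeaten H (C := Node (Node (z :: s) :: t2 :: rest))).
  by rewrite !order_node /=; lia.
have Hσ_pos : 0 < Isum s by apply: leq_trans _ (Isum_ge_size s); case: s Hs {H Hle}.
rewrite [I (Node (_ :: _ :: _ :: _))]I_node [I (Node (Node _ :: _ :: _))]I_node.
rewrite !Isum_cons !Iprod_cons [I (Node (z :: s))]I_node Isum_cons Iprod_cons.
move: Hle; rewrite [I (Node s)]I_node.
have := Iprod_gt_Isum s; have := Iprod_gt_Isum rest; have := I_pos z; move: Hσ_pos.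
move: (Isum s) (Iprod s) (I t2) (I z) (Isum rest) (Iprod rest) => σ p x2 zv R Q.
move=> Hσ Hz HQ Hp Hle.
have K1 : x2.+1 <= σ * (x2.+1 * Q).
  by apply: leq_trans (leq_pmulr _ (_ : 0 < Q)) (leq_pmull _ Hσ); lia.
have K2 : zv * p < zv * (σ * (x2.+1 * Q)) by rewrite ltn_pmul2l; lia.
nia.
Qed.

(* Three leaves of a root become one cherry (a vertex with two leaf children)
   as soon as the other children contribute a factor at least 4 to I. *)
Lemma three_leaves_to_cherry rest :
  4 <= Iprod rest -> minimal_tree (Node [:: leaf, leaf, leaf & rest]) -> False.
Proof.
move=> HQ H.
apply: (minimal_unbeaten H (C := Node (Node [:: leaf; leaf] :: rest))).
  by rewrite !order_node /=; lia.
by rewrite !I_node !Isum_cons !Iprod_cons I_leaf I_pair I_leaf /Ipair; lia.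
Qed.

(* A grandchild [S1] with I at least 3 below a child that has two leaf
   siblings can be lifted to the root, the two leaves moving down. *)
Lemma lift_grandchild S1 ss :
  3 <= I S1 -> minimal_tree (Node [:: Node (S1 :: ss); leaf; leaf]) -> False.
Proof.
move=> H1 H.
apply: (minimal_unbeaten H (C := Node [:: S1; Node [:: leaf, leaf & ss]])).
  by rewrite !order_node /=; lia.
rewrite [I (Node [:: _; _])]I_node [I (Node [:: _; _; _])]I_node.
rewrite !Isum_cons !Iprod_cons !Isum_nil !Iprod_nil.
rewrite [I (Node (leaf :: _))]I_node [I (Node (S1 :: ss))]I_node.
rewrite !Isum_cons !Iprod_cons !I_leaf.
have := Iprod_gt_Isum ss; move: H1.
move: (Isum ss) (Iprod ss) (I S1) => σ V x1 H1 HV.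
have [d ->] : exists d, V = σ.+1 + d by exists (V - σ.+1); lia.
nia.
Qed.

Definition isleaf (t : rtree) : bool := children t == [::].

Lemma nonleaf_node t : ~~ isleaf t -> exists s, t = Node s /\ s != [::].
Proof. by case: t => s; exists s. Qed.

Lemma perm_nonleaves_leaves ts :
  perm_eq ts (filter (predC isleaf) ts ++ nseq (count isleaf ts) leaf).
Proof.
have leavesE : filter isleaf ts = nseq (count isleaf ts) leaf.
  by elim: ts => //= -[[|? ?]] ts ->.
by rewrite -leavesE perm_sym perm_catC perm_filterC.
Qed.

Lemma Iprod_leaves m : Iprod (nseq m leaf) = 2 ^ m.
Proof. by elim: m => //= m IH; rewrite Iprod_cons IH I_leaf expnS. Qed.

Lemma order_leaves m : sumn (map order (nseq m leaf)) = m.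
Proof. by elim: m => //= m ->. Qed.

Lemma minimal_star m : 4 <= m -> minimal_tree (Node (nseq m leaf)) -> m = 4.
Proof.
move=> Hm H; case: (ltngtP m 4) => // Hm4; first lia.
exfalso; have E3 : m = (m - 3).+3 by lia.
rewrite E3 /= in H; apply: (three_leaves_to_cherry _ H).
rewrite Iprod_leaves; have -> : m - 3 = (m - 5).+2 by lia.
by rewrite !expnS; have := expn_gt0 2 (m - 5); lia.
Qed.

Lemma minimal_perm_child ss ss' rest : perm_eq ss ss' ->
  minimal_tree (Node (Node ss :: rest)) -> minimal_tree (Node (Node ss' :: rest)).
Proof.
move=> P H; apply: (minimal_transfer H).
  by rewrite !order_node /= -!order_node (perm_order P).
by rewrite !I_node !Isum_cons !Iprod_cons (perm_I P).
Qed.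

(* If that child is a star, it is a minimal star, hence has
   four leaves, and the whole tree (I = 106) is beaten by the root with a
   3-leaf star and a cherry as children (I = 101); otherwise a grandchild can
   be lifted. *)
Lemma no_nonleaf_beside_two_leaves ss : ss != [::] ->
  minimal_tree (Node [:: Node ss; leaf; leaf]) ->
  8 <= order (Node [:: Node ss; leaf; leaf]) -> False.
Proof.
move=> Hss H Ho.
have HS : minimal_tree (Node ss) by apply: (minimal_child H); rewrite mem_head.
have P := perm_nonleaves_leaves ss.
move: P; case E: (filter (predC isleaf) ss) => [|S1 N2] P.
- have order_ss : order (Node ss) = (count isleaf ss).+1.
    by rewrite (perm_order P) /= order_leaves.
  have four : count isleaf ss = 4.
    apply: (minimal_star _ (minimal_perm HS P)).
    by move: Ho; rewrite /= -order_node; lia.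
  have I_ss : I (Node ss) = 20.
    by rewrite (perm_I P) /= four I_node /Isum /Iprod /= !I_leaf.
  apply: (minimal_unbeaten H (C := Node [:: Node [:: leaf; leaf; leaf]; Node [:: leaf; leaf]])).
    by rewrite /= -order_node order_ss four.
  rewrite [I (Node [:: Node ss; _; _])]I_node !Isum_cons !Iprod_cons I_ss I_leaf.
  by rewrite I_pair !I_node /Isum /Iprod /= !I_leaf /Ipair.
- have [s1 [ES1 Hs1]] : exists s1, S1 = Node s1 /\ s1 != [::].
    apply: nonleaf_node.
    have : S1 \in filter (predC isleaf) ss by rewrite E mem_head.
    by rewrite mem_filter => /andP [].
  rewrite ES1 in P; apply: (lift_grandchild (I_nonleaf Hs1)).
  exact: (minimal_perm_child P H).
Qed.

Lemma no_large_star m :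
  minimal_tree (Node (nseq m leaf)) -> 8 <= order (Node (nseq m leaf)) -> False.
Proof.
rewrite order_node order_leaves => H Ho.
by have := minimal_star (_ : 4 <= m) H; lia.
Qed.

(* One non-leaf child and at least two leaves: with three or more leaves
   they form a cherry, with exactly two a grandchild is lifted. *)
Lemma no_single_nonleaf_with_leaves t1 l : ~~ isleaf t1 -> 2 <= l ->
  minimal_tree (Node (t1 :: nseq l leaf)) -> 8 <= order (Node (t1 :: nseq l leaf)) -> False.
Proof.
move=> Ht1 Hl H Ho; have [s [Es Hs]] := nonleaf_node Ht1.
case: (ltngtP l 2) => Hl2; first lia.
- have El : l = (l - 3).+3 by lia.
  rewrite El in H; apply: (three_leaves_to_cherry (rest := t1 :: nseq (l - 3) leaf)).
    rewrite Iprod_cons Iprod_leaves Es.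
    by have := I_nonleaf Hs; have := expn_gt0 2 (l - 3); nia.
  apply: (minimal_perm H).
  by have := perm_catCA [:: t1] [:: leaf; leaf; leaf] (nseq (l - 3) leaf); rewrite /= => ->.
- by subst l; rewrite Es in H Ho; apply: (no_nonleaf_beside_two_leaves Hs H Ho).
Qed.

(* Two non-leaves and a third child: graft the third child below the
   non-leaf with the smaller I. *)
Lemma no_two_nonleaves_and_more t1 t2 z rest : ~~ isleaf t1 -> ~~ isleaf t2 ->
  minimal_tree (Node [:: t1, t2, z & rest]) -> False.
Proof.
move=> /nonleaf_node [s1 [E1 Hs1]] /nonleaf_node [s2 [E2 Hs2]] H.
case: (leqP (I t1) (I t2)) => Hle.
- by rewrite E1 in H Hle; exact: (graft_below_nonleaf Hs1 Hle H).
- by move/minimal_swap: H; rewrite E2 in Hle *; exact: (graft_below_nonleaf Hs2 (ltnW Hle)).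
Qed.

Lemma minimal_le2_children ts :
  minimal_tree (Node ts) -> 8 <= order (Node ts) -> size ts <= 2.
Proof.
move=> H Ho; rewrite leqNgt; apply/negP => Hsz.
have P := perm_nonleaves_leaves ts.
have {}H := minimal_perm H P; rewrite (perm_order P) in Ho.
have Hsize : size ts = size (filter (predC isleaf) ts) + count isleaf ts.
  by rewrite (perm_size P) size_cat size_nseq.
have Hall : all (predC isleaf) (filter (predC isleaf) ts) by apply: filter_all.
move: H Ho Hsize Hall; case: (filter (predC isleaf) ts) => [|t1 [|t2 N']] H Ho Hsize Hall.
- exact: (no_large_star H Ho).
- move: Hall => /andP [Ht1 _].
  by apply: (no_single_nonleaf_with_leaves Ht1 _ H Ho); rewrite /= in Hsize; lia.
- move: Hall => /and3P [Ht1 Ht2 _].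
  rewrite !cat_cons in H; move: H; case: (N' ++ nseq (count isleaf ts) leaf)
    (size_cat N' (nseq (count isleaf ts) leaf)) => [|z rest] Hrest H.
    by rewrite size_nseq /= in Hrest Hsize; lia.
  exact: (no_two_nonleaves_and_more Ht1 Ht2 H).
Qed.

(* Hence, having no single child, it has exactly two children. *)
Lemma minimal_two_children t :
  minimal_tree t -> 8 <= order t -> exists a b, t = Node [:: a; b].
Proof.
case: t => ts H Ho; have := minimal_le2_children H Ho.
case: ts H Ho => [|a [|b [|c ts]]] H Ho //= _; last by exists a, b.
by exfalso; apply: (minimal_no_single_child H); lia.
Qed.

(* A structurally recursive evaluation of I, suitable for computation. *)
Fixpoint Ival (t : rtree) : nat :=
  let: Node ts := t in sumn (map Ival ts) + foldr muln 1 (map (fun u => (Ival u).+1) ts).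

Lemma I_Ival t : I t = Ival t.
Proof.
elim/rtree_ind_mem: t => ts IH; rewrite I_node /Isum /Iprod /=.
by congr (_ + _); [congr sumn | congr foldr]; apply/eq_in_map => u /IH ->.
Qed.

(* The minimum m_n of I over trees of order n, for n <= 8. *)
Definition m_table (n : nat) : nat := nth 0 [:: 0; 1; 3; 6; 11; 20; 36; 61; 101] n.

Definition node_bound (g : nat -> nat) (os : seq nat) : nat :=
  sumn (map g os) + foldr muln 1 (map (fun k => (g k).+1) os).

Lemma node_bound_le (g : nat -> nat) ts :
  {in ts, forall c, g (order c) <= I c} -> node_bound g (map order ts) <= I (Node ts).
Proof.
move=> H; rewrite I_node /node_bound; apply: leq_add.
- elim: ts H => //= c cs IH H; rewrite Isum_cons leq_add ?H ?mem_head //.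
  by apply: IH => c' Hc'; apply: H; rewrite in_cons Hc' orbT.
- elim: ts H => //= c cs IH H; rewrite Iprod_cons leq_mul ?ltnS ?H ?mem_head //.
  by apply: IH => c' Hc'; apply: H; rewrite in_cons Hc' orbT.
Qed.

Fixpoint compositions (fuel n : nat) : seq (seq nat) :=
  if fuel is fuel'.+1 then
    if n is 0 then [:: [::]] else
    flatten [seq map (cons k) (compositions fuel' (n - k)) | k <- iota 1 n]
  else [:: [::]].

Lemma mem_compositions os fuel : all (fun k => 0 < k) os -> size os <= fuel ->
  os \in compositions fuel (sumn os).
Proof.
elim: os fuel => [|k os IH] [|fuel] //= /andP [Hk Hos] Hsz.
case En: (k + sumn os) => [|n']; first lia.
apply/allpairsPdep; exists k, os; split => //; first by rewrite mem_iota; lia.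
have -> : n'.+1 - k = sumn os by lia.
exact: IH.
Qed.

Lemma m_table_closed :
  all (fun s => all (fun os => m_table s.+1 <= node_bound m_table os) (compositions 7 s))
      (iota 0 8).
Proof. by vm_compute. Qed.

(* m_table n is indeed a lower bound on I at order n <= 8, by induction:
   the orders of the children form a composition of n - 1. *)
Lemma I_ge_m_table t : order t <= 8 -> m_table (order t) <= I t.
Proof.
elim/rtree_ind_mem: t => ts IH Ho.
apply: leq_trans (node_bound_le (g := m_table) _); last first.
  by move=> c Hc; apply: IH => //; have := order_child Hc; lia.
have /allP /(_ (sumn (map order ts))) := m_table_closed.
rewrite mem_iota add0n leq0n => /(_ ltac:(move: Ho; rewrite /=; lia)) /allP.
apply; apply: mem_compositions.
  by apply/allP => k /mapP [c _ ->]; exact: order_pos.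
have : size (map order ts) <= sumn (map order ts).
  by elim: ts {IH Ho} => //= c cs; have := order_pos c; lia.
by move: Ho; rewrite /=; lia.
Qed.

(* Deleting a leaf does not increase I: follow the first children down to a
   vertex whose first child is a leaf, and delete that leaf. *)
Lemma delete_leaf t : 2 <= order t -> exists t', order t' = (order t).-1 /\ I t' <= I t.
Proof.
elim/rtree_ind_mem: t => [[|c cs]] IH Ho //.
case: c IH Ho => [[|d ds]] IH Ho.
- exists (Node cs); split; first by [].
  by rewrite [I (Node (_ :: _))]I_node Isum_cons Iprod_cons I_leaf I_node; lia.
- have [c' [Hoc Hic]] := IH _ (mem_head _ _) (ltac:(rewrite /=; have := order_pos d; lia)).
  exists (Node (c' :: cs)); split; first by rewrite order_node /= Hoc /=; lia.
  rewrite [I (Node (c' :: cs))]I_node [I (Node (Node (d :: ds) :: cs))]I_node.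
  by rewrite !Isum_cons !Iprod_cons leq_add ?leq_mul // leq_add.
Qed.

(* Deleting leaves down to order 8 shows I >= m_8 = 101 from order 8 on. *)
Lemma I_ge_101 t : 8 <= order t -> 101 <= I t.
Proof.
have prune n u : order u = 8 + n -> exists u', order u' = 8 /\ I u' <= I u.
  elim: n u => [|n IH] u Hou; first by exists u; rewrite Hou addn0.
  have [u' [Hou' Hiu']] := delete_leaf (ltac:(lia) : 2 <= order u).
  have [u'' [Hou'' Hiu'']] := IH u' (ltac:(rewrite Hou' Hou; lia)).
  by exists u''; split => //; apply: leq_trans Hiu'' Hiu'.
move=> Ho; have [t' [Ho' Hi']] := prune (order t - 8) t ltac:(lia).
by apply: leq_trans Hi'; have := I_ge_m_table (ltac:(lia) : order t' <= 8); rewrite Ho'.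
Qed.

Definition star (k : nat) : rtree := Node (nseq k leaf).

Definition small_tree (n : nat) : rtree :=
  match n with
  | 2 => star 1 | 3 => star 2 | 4 => star 3 | 5 => star 4
  | 6 => Node [:: star 3; leaf] | 7 => Node [:: star 2; star 2]
  | _ => leaf
  end.

Lemma small_tree_spec :
  all (fun n => (order (small_tree n) == n) && (Ival (small_tree n) <= 61)) (iota 1 7).
Proof. by vm_compute. Qed.

Lemma I_minimal_small A : minimal_tree A -> order A <= 7 -> I A <= 61.
Proof.
move=> HA HA7; have /allP /(_ (order A)) := small_tree_spec.
rewrite mem_iota => /(_ ltac:(have := order_pos A; lia)) /andP [/eqP Ho HI].
by apply: leq_trans (HA _ Ho) _; rewrite I_Ival.
Qed.

Definition large_side (k : nat) : rtree :=
  match k with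
  | 8 => Node [:: star 3; star 2] | 9 => Node [:: star 3; star 3]
  | 10 => Node [:: star 4; star 3] | 11 => Node [:: star 4; star 4]
  | 12 => Node [:: Node [:: star 2; star 2]; star 3]
  | _ => Node [:: Node [:: star 3; star 2]; star 3]
  end.

Definition witness (n : nat) : rtree := Node [:: large_side (n - 10); Node [:: star 3; star 3]].

(* Each witness beats every tree [Node [:: A; Node [:: B1; B2]]] of the same
   order n >= 18 whose grandchildren B1, B2 and child A have order <= 7,
   judging the latter only through the lower bounds m_n. *)
Lemma witness_spec :
  all (fun a => all (fun b1 => all (fun b2 =>
     (a + b1 + b2 < 16) ||
     ((order (witness (a + b1 + b2 + 2)) == a + b1 + b2 + 2) &&
      (Ival (witness (a + b1 + b2 + 2)) <
         Ipair (m_table a) (Ipair (m_table b1) (m_table b2)))))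
    (iota 1 7)) (iota 1 7)) (iota 1 7).
Proof. by vm_compute. Qed.

(* In a minimal tree, a grandchild never has larger I than its uncle: else
   exchanging them would lower I. *)
Lemma grandchild_le_uncle A B1 B2 :
  minimal_tree (Node [:: A; Node [:: B1; B2]]) -> I B1 <= I A.
Proof.
move=> H; rewrite leqNgt; apply/negP => Hlt.
apply: (minimal_unbeaten H (C := Node [:: B1; Node [:: A; B2]])); first by rewrite /=; lia.
by rewrite !I_pair /Ipair; move: Hlt; move: (I A) (I B1) (I B2) => a b c Hlt; nia.
Qed.

(* If the uncle is small (order <= 7), so are both grandchildren, since
   trees of order >= 8 have I >= 101 > 61. *)
Lemma small_uncle_small_grandchildren A B1 B2 :
  minimal_tree (Node [:: A; Node [:: B1; B2]]) -> order A <= 7 ->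
  order B1 <= 7 /\ order B2 <= 7.
Proof.
move=> H HA7.
have HA : minimal_tree A by apply: (minimal_child H); rewrite mem_head.
have H' : minimal_tree (Node [:: A; Node [:: B2; B1]]).
  have P : perm_eq [:: B1; B2] [:: B2; B1] by apply/permPl; exact: (perm_catC [:: B1] [:: B2]).
  by apply: minimal_swap; apply: (minimal_perm_child P); exact: minimal_swap.
have small B : I B <= I A -> order B <= 7.
  move=> HB; rewrite leqNgt; apply/negP => /I_ge_101.
  by have := I_minimal_small HA HA7; lia.
by split; apply: small; [apply: (grandchild_le_uncle H) | apply: (grandchild_le_uncle H')].
Qed.

(* In a minimal tree of order >= 18 with two children, no child has order
   <= 7: otherwise the other child has two children, all three of order
   <= 7, and the corresponding witness tree has smaller I. *)
Lemma no_small_child A B :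
  minimal_tree (Node [:: A; B]) -> 18 <= order (Node [:: A; B]) -> order A <= 7 -> False.
Proof.
move=> H Ho HA7.
have HB : minimal_tree B by apply: (minimal_child H); rewrite !inE eqxx orbT.
have [B1 [B2 EB]] := minimal_two_children HB (ltac:(move: Ho; rewrite /=; lia)); subst B.
have [HB1 HB2] := small_uncle_small_grandchildren H HA7.
have HoT : order (Node [:: A; Node [:: B1; B2]]) = order A + order B1 + order B2 + 2.
  by rewrite /=; lia.
have lbT : Ipair (m_table (order A)) (Ipair (m_table (order B1)) (m_table (order B2)))
           <= I (Node [:: A; Node [:: B1; B2]]).
  by rewrite !I_pair; apply: Ipair_mono; [|apply: Ipair_mono]; apply: I_ge_m_table; lia.
have in_range c : order c <= 7 -> order c \in iota 1 7.
  by rewrite mem_iota; have := order_pos c; lia.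
have /allP /(_ _ (in_range _ HA7)) /allP /(_ _ (in_range _ HB1)) /allP
     /(_ _ (in_range _ HB2)) /orP [|/andP [/eqP Hoc Hic]] := witness_spec.
  by move: Ho; rewrite HoT; lia.
apply: (minimal_unbeaten H (C := witness (order A + order B1 + order B2 + 2))).
  by rewrite Hoc HoT.
by rewrite I_Ival; apply: leq_trans lbT.
Qed.

Theorem lemma3p4 (T : rtree) :
  minimal_tree T -> 18 <= tree_order T ->
  exists a b : rtree,
    children T = [:: a; b] /\
    size (children a) = 2 /\ size (children b) = 2.
Proof.
move=> H Ho.
have [A [B EB]] := minimal_two_children H (leq_trans (isT : 8 <= 18) Ho); subst T.
exists A, B; split => //.
have HA : minimal_tree A by apply: (minimal_child H); rewrite mem_head.
have HB : minimal_tree B by apply: (minimal_child H); rewrite !inE eqxx orbT.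
have HoA : 8 <= order A by rewrite leqNgt; apply/negP; exact: no_small_child H Ho.
have HoB : 8 <= order B.
  rewrite leqNgt; apply/negP; apply: (no_small_child (minimal_swap H)).
  by move: Ho; rewrite /=; lia.
have [a1 [a2 ->]] := minimal_two_children HA HoA.
by have [b1 [b2 ->]] := minimal_two_children HB HoB.
Qed.
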